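(* Each of the semantics $\mathit{stg}$, $\mathit{tfstg2}$ and $\mathit{stg1.5}$ fails to be $\preceq^E_\cap$-skepticism adequate and fails to be $\preceq^E_W$-skepticism adequate.
   Context: An argumentation framework (AF) is $\mathcal{F}=(A_{\mathcal{F}},R_{\mathcal{F}})$ with $R_{\mathcal{F}}\subseteq A_{\mathcal{F}}\times A_{\mathcal{F}}$; $a\rightarrow b$ means $(a,b)\in R_{\mathcal{F}}$. $\mathrm{conf}(\mathcal{F})=\{(x,y):(x,y)\in R_{\mathcal{F}}\text{ or }(y,x)\in R_{\mathcal{F}}\}$. $\tau_1\preceq^E_\cap\tau_2$ iff $\bigcap_{S_1\in\tau_1}S_1\subseteq\bigcap_{S_2\in\tau_2}S_2$; $\tau_1\preceq^E_W\tau_2$ iff for every $S_2\in\tau_2$ there is $S_1\in\tau_1$ with $S_1\subseteq S_2$. A semantics $\sigma$ is $\preceq$-skepticism adequate if for any AFs $\mathcal{F},\mathcal{G}$ on the same argument set with $R_{\mathcal{F}}\supseteq R_{\mathcal{G}}$ and $\mathrm{conf}(\mathcal{F})=\mathrm{conf}(\mathcal{G})$, $\sigma(\mathcal{F})\preceq\sigma(\mathcal{G})$. $\mathcal{F}|_B=(A_{\mathcal{F}}\cap B,R_{\mathcal{F}}\cap(B\times B))$. Conflict-free: no $a,b\in S$ with $a\rightarrow b$; $S^\oplus=S\cup\{x:\exists y\in S,\ y\rightarrow x\}$; $\mathit{stg}(\mathcal{F})$: conflict-free $S$ with no conflict-free $T$ such that $S^\oplus\subsetneq T^\oplus$. $\mathrm{SCC}(a)$: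 set of $b$ with directed attack paths (possibly of length 0) from $a$ to $b$ and back. $D_S(X)=\{b\in X:\exists a\in S\setminus X,\ a\rightarrow b\}$. $\mathit{tfstg2}$: $C^0_S(a)=\mathrm{SCC}(a)$; $C^{\alpha+1}_S(a)$ = component of $a$ in $\mathcal{F}|_{C^\alpha_S(a)\setminus D_S(C^\alpha_S(a))}$; for limit $\lambda$, component of $a$ in $\mathcal{F}|_{\bigcap_{\alpha<\lambda}C^\alpha_S(a)}$; $\alpha_S(a)$ = least $\alpha$ with $a\notin C^\alpha_S(a)$ or $C^{\alpha+1}_S(a)=C^\alpha_S(a)$; $S\in\mathit{tfstg2}(\mathcal{F})$ iff conflict-free and for each $a$, $a\notin C^{\alpha_S(a)}_S(a)$ or $S\cap C^{\alpha_S(a)}_S(a)$ is a stage extension of $\mathcal{F}|_{C^{\alpha_S(a)}_S(a)}$. $\mathit{stg1.5}$: $S$ conflict-free and for each strongly connected component $X$ of $\mathcal{F}$, $S\cap X$ is a stage extension of $\mathcal{F}|_{X\setminus D_S(X)}$. *)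

From mathcomp Require Import all_boot.
Set Implicit Arguments. Unset Strict Implicit. Unset Printing Implicit Defensive.

Record AF (T : finType) := mkAF { args : {set T}; att : rel T }.

Section Defs.
Variable T : finType.
Implicit Types (F : AF T) (S U X B : {set T}).

Definition wf_AF F := forall x y, att F x y -> (x \in args F) && (y \in args F).

Definition conf F : rel T := fun x y => att F x y || att F y x.

Definition restrict F B : AF T :=
  mkAF (args F :&: B) (fun x y => [&& att F x y, x \in B & y \in B]).

Definition conflict_free F S :=
  (S \subset args F) && [forall x in S, forall y in S, ~~ att F x y].

Definition range F S := S :|: [set x in args F | [exists y in S, att F y x]].

Definition stg F : {set {set T}} :=
  [set S : {set T} | conflict_free F S &&
     [forall U : {set T}, conflict_free F U ==> ~~ (range F S \proper range F U)]].

Definition attA F : rel T := fun x y => [&& att F x y, x \in args F & y \in args F].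

(* SCC(a) in F (empty if a is not an argument of F) *)
Definition scc F (a : T) : {set T} :=
  [set b in args F | (a \in args F) && connect (attA F) a b && connect (attA F) b a].

Definition DS F S X : {set T} := [set b in X | [exists a in S :\: X, att F a b]].

Fixpoint Cit F S (a : T) (n : nat) : {set T} :=
  match n with
  | 0 => scc F a
  | n'.+1 => let X := Cit F S a n' in scc (restrict F (X :\: DS F S X)) a
  end.

(* alpha_S(a): least n with a \notin C^n or C^{n+1} = C^n (always reached
   before #|T|.+2 in a finite AF). *)
Definition alphaS F S (a : T) : nat :=
  find (fun n => (a \notin Cit F S a n) || (Cit F S a n.+1 == Cit F S a n))
       (iota 0 (#|T|.+2)).

Definition tfstg2 F : {set {set T}} :=
  [set S : {set T} | conflict_free F S &&
     [forall a in args F,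
        let C := Cit F S a (alphaS F S a) in
        (a \notin C) || (S :&: C \in stg (restrict F C))]].

(* stg1.5: the SCCs of F are exactly the sets scc F a, a an argument. *)
Definition stg15 F : {set {set T}} :=
  [set S : {set T} | conflict_free F S &&
     [forall a in args F,
        let X := scc F a in S :&: X \in stg (restrict F (X :\: DS F S X))]].

Definition prec_cap (t1 t2 : {set {set T}}) :=
  (\bigcap_(S in t1) S) \subset (\bigcap_(S in t2) S).

Definition prec_W (t1 t2 : {set {set T}}) :=
  [forall S2 in t2, exists S1 in t1, S1 \subset S2].

End Defs.

Definition semantics := forall T : finType, AF T -> {set {set T}}.
Definition ordering := forall T : finType, {set {set T}} -> {set {set T}} -> bool.

Definition skepticism_adequate (pre : ordering) (sigma : semantics) : Prop :=
  forall (T : finType) (F G : AF T),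
    wf_AF F -> wf_AF G -> args F = args G ->
    (forall x y, att G x y -> att F x y) ->
    (forall x y, conf F x y = conf G x y) ->
    pre T (sigma T F) (sigma T G).

From mathcomp Require Import all_boot.
Set Implicit Arguments. Unset Strict Implicit. Unset Printing Implicit Defensive.

(* Let F be the framework on {a0, a1, a2} with attacks a0 <-> a1, a0 <-> a2
   and a self-attack on a1, and let G drop the attack a0 -> a2: G has fewer
   attacks than F but the same conflicts.  In F, {a0} attacks everything, and
   a0 is the only conflict-free way to put the self-attacker a1 in the range,
   so every stage extension contains a0; as F is a single SCC, the same holds
   for tfstg2 and stg1.5.  In G the unattacked a2 yields the extension {a2}:
   it is stage because covering a1 needs a0, which conflicts with a2, and the
   attack of a2 on a0 cuts the SCC {a0, a1} down to the self-attacker a1, on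
   which the empty set is stage.  So a0 is skeptically accepted in F but not
   in G, which violates both prec_cap and prec_W. *)

Section Frameworks.
Variable T : finType.
Implicit Types (F : AF T) (S U X : {set T}) (a b x y : T).

Lemma conflict_freeP F S :
  reflect (S \subset args F /\ forall x y, x \in S -> y \in S -> ~~ att F x y)
          (conflict_free F S).
Proof.
apply: (iffP andP) => [[sSA /forallP cf]|[sSA cf]]; split=> //.
  by move=> x y xS yS; move/implyP/(_ xS)/forallP/(_ y)/implyP/(_ yS): (cf x).
by apply/forall_inP=> x xS; apply/forall_inP=> y yS; apply: cf.
Qed.

Lemma range_subset F S : S \subset args F -> range F S \subset args F.
Proof. by move=> sSA; rewrite subUset sSA; apply/subsetP=> x /setIdP[]. Qed.

Lemma stg_range_full F S :
  conflict_free F S -> args F \subset range F S -> S \in stg F.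
Proof.
move=> cfS sAR; rewrite inE cfS; apply/forall_inP=> U /conflict_freeP[sUA _].
apply/negP=> /properP[_ [x xRU xRS]].
by move: xRS; rewrite (subsetP sAR) // (subsetP (range_subset sUA)).
Qed.

Lemma range_full_stg F U S :
  conflict_free F U -> args F \subset range F U -> S \in stg F ->
  args F \subset range F S.
Proof.
move=> cfU sAU /setIdP[/conflict_freeP[sSA _] /forall_inP/(_ U cfU) maxS].
apply/subsetP=> x xA; apply/negPn/negP=> xRS; case/negP: maxS.
apply/properP; split; last by exists x; rewrite ?(subsetP sAU).
exact: subset_trans (range_subset sSA) sAU.
Qed.

Lemma set0_stg F : {in args F, forall x, att F x x} -> set0 \in stg F.
Proof.
move=> selfatt; rewrite inE; apply/andP; split.
  by apply/conflict_freeP; split=> [|x y]; rewrite ?sub0set ?inE.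
apply/forall_inP=> U /conflict_freeP[sUA cfU].
suff -> : U = set0 by rewrite properxx.
apply/setP=> x; rewrite inE; apply/negbTE/negP=> xU.
by have := cfU x x xU xU; rewrite selfatt // (subsetP sUA).
Qed.

Lemma in_scc F a b :
  (b \in scc F a) =
  [&& b \in args F, a \in args F, connect (attA F) a b & connect (attA F) b a].
Proof. by rewrite inE !andbA. Qed.

Lemma scc_nonarg F a : a \notin args F -> scc F a = set0.
Proof. by move=> aA; apply/setP=> b; rewrite in_scc inE (negbTE aA) andbF. Qed.

Lemma scc_singleton F a : args F = [set a] -> scc F a = [set a].
Proof.
move=> defA; apply/setP=> b; rewrite in_scc defA !inE eqxx /=.
by case: eqP => [->|]; rewrite ?connect0.
Qed.

Lemma connect_unattacked (e : rel T) x y :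
  (forall z, ~~ e z y) -> connect e x y -> x = y.
Proof.
move=> noatt /connectP[p]; case/lastP: p => [_ -> //|p z].
by rewrite rcons_path last_rcons => /andP[_ ezy] eq_yz; rewrite -eq_yz (negbTE (noatt _)) in ezy.
Qed.

Lemma DS_sub F S X : S \subset X -> DS F S X = set0.
Proof.
move=> sSX; apply/setP=> b; rewrite !inE; apply/negbTE/negP=> /andP[_ /exists_inP[a]].
by rewrite !inE => /andP[aX /(subsetP sSX)]; rewrite (negbTE aX).
Qed.

Lemma DS_set1 F a X : a \notin X -> DS F [set a] X = [set b in X | att F a b].
Proof.
move=> aX; apply/setP=> b; rewrite !inE; congr andb.
apply/exists_inP/idP=> [[c]|]; first by rewrite !inE => /andP[_ /eqP->].
by exists a; rewrite // !inE eqxx aX.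
Qed.

Lemma attA_restrictT F : attA (restrict F setT) =2 attA F.
Proof. by move=> x y; rewrite /attA /= setIT !in_setT !andbT. Qed.

Lemma scc_restrictT F a : scc (restrict F setT) a = scc F a.
Proof. by apply/setP=> b; rewrite !in_scc /= setIT !(eq_connect (attA_restrictT F)). Qed.

Lemma stg_restrictT F : stg (restrict F setT) = stg F.
Proof.
have cfE S : conflict_free (restrict F setT) S = conflict_free F S.
  rewrite /conflict_free /= setIT; congr andb.
  by do 2![apply: eq_forallb=> ?; congr implb]; rewrite !in_setT !andbT.
have rangeE S : range (restrict F setT) S = range F S.
  apply/setP=> x; rewrite !inE /= andbT; congr (_ || (_ && _)).
  by apply: eq_existsb => y; rewrite !in_setT !andbT.
by apply/setP=> S; rewrite !inE cfE; congr andb; apply: eq_forallb=> U; rewrite cfE !rangeE.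
Qed.

Arguments Cit : simpl never.

Lemma Cit0 F S a : Cit F S a 0 = scc F a.
Proof. by []. Qed.

Lemma CitS F S a n :
  Cit F S a n.+1 = scc (restrict F (Cit F S a n :\: DS F S (Cit F S a n))) a.
Proof. by []. Qed.

Lemma alphaS_eq0 F S a : Cit F S a 1 = Cit F S a 0 -> alphaS F S a = 0.
Proof. by move=> C10; rewrite /alphaS /= C10 eqxx orbT. Qed.

Lemma alphaS_eq1 F S a :
    a \in Cit F S a 0 -> Cit F S a 1 != Cit F S a 0 ->
    (a \notin Cit F S a 1) || (Cit F S a 2 == Cit F S a 1) ->
  alphaS F S a = 1.
Proof. by move=> aC0 C10 stop1; rewrite /alphaS /= aC0 (negbTE C10) stop1. Qed.

Lemma prec_capN (t1 t2 : {set {set T}}) a S :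
  {in t1, forall S1, a \in S1} -> S \in t2 -> a \notin S -> ~~ prec_cap t1 t2.
Proof.
move=> a_t1 St2 aS; apply/negP=> /subsetP/(_ a).
have -> : a \in \bigcap_(S1 in t1) S1 by apply/bigcapP.
by move/(_ isT)/bigcapP/(_ S St2); apply/negP.
Qed.

Lemma prec_WN (t1 t2 : {set {set T}}) a S :
  {in t1, forall S1, a \in S1} -> S \in t2 -> a \notin S -> ~~ prec_W t1 t2.
Proof.
move=> a_t1 St2 aS; apply/negP=> /forall_inP/(_ S St2)/exists_inP[S1 /a_t1 aS1].
by move/subsetP/(_ a aS1); apply/negP.
Qed.

End Frameworks.

Definition a0 : 'I_3 := @Ordinal 3 0 isT.
Definition a1 : 'I_3 := @Ordinal 3 1 isT.
Definition a2 : 'I_3 := @Ordinal 3 2 isT.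

Lemma ord3P (x : 'I_3) : [\/ x = a0, x = a1 | x = a2].
Proof.
by case: x => -[|[|[|//]]] ?; [apply: Or31 | apply: Or32 | apply: Or33]; apply: val_inj.
Qed.

Definition Fex_att : rel 'I_3 := fun x y =>
  (x, y) \in [:: (a0, a1); (a1, a0); (a1, a1); (a0, a2); (a2, a0)].
Definition Gex_att : rel 'I_3 := fun x y =>
  (x, y) \in [:: (a0, a1); (a1, a0); (a1, a1); (a2, a0)].

Definition Fex : AF 'I_3 := mkAF setT Fex_att.
Definition Gex : AF 'I_3 := mkAF setT Gex_att.

Lemma attA_Fex : attA Fex =2 Fex_att.
Proof. by move=> x y; rewrite /attA !in_setT !andbT. Qed.

Lemma scc_Fex a : scc Fex a = setT.
Proof.
have via_a0 x : connect (attA Fex) a0 x && connect (attA Fex) x a0.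
  by case: (ord3P x) => ->; rewrite ?connect0 // !connect1 // attA_Fex.
apply/setP=> b; rewrite in_scc !in_setT /=.
have /andP[a0a aa0] := via_a0 a; have /andP[a0b ba0] := via_a0 b.
by rewrite (connect_trans aa0 a0b) (connect_trans ba0 a0a).
Qed.

Lemma stg_Fex_a0 : {in stg Fex, forall S : {set 'I_3}, a0 \in S}.
Proof.
move=> S stgS; have /setIdP[/conflict_freeP[_ cfS] _] := stgS.
have cf_a0 : conflict_free Fex [set a0].
  by apply/conflict_freeP; split=> [|x y /set1P-> /set1P->]; rewrite ?subsetT.
have full_a0 : args Fex \subset range Fex [set a0].
  apply/subsetP=> x _; rewrite !inE; case: (ord3P x) => ->; rewrite ?eqxx //;
  by apply/exists_inP; exists a0; rewrite ?inE.
have := subsetP (range_full_stg cf_a0 full_a0 stgS) a1 (in_setT a1).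
rewrite !inE => /orP[a1S|/exists_inP[y yS]]; first by have := cfS _ _ a1S a1S.
by case: (ord3P y) yS => -> yS //; have := cfS _ _ yS yS.
Qed.

Lemma stg15_Fex_a0 : {in stg15 Fex, forall S : {set 'I_3}, a0 \in S}.
Proof.
move=> S /setIdP[_ /forall_inP/(_ a0 (in_setT a0))].
by rewrite /= scc_Fex DS_sub ?subsetT // setD0 setIT stg_restrictT; apply: stg_Fex_a0.
Qed.

Lemma tfstg2_Fex_a0 : {in tfstg2 Fex, forall S : {set 'I_3}, a0 \in S}.
Proof.
move=> S /setIdP[_ /forall_inP/(_ a0 (in_setT a0))].
have C0 : Cit Fex S a0 0 = setT by rewrite Cit0 scc_Fex.
have C1 : Cit Fex S a0 1 = setT by rewrite CitS C0 DS_sub ?subsetT // setD0 scc_restrictT scc_Fex.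
rewrite /= alphaS_eq0 ?C0 ?C1 // in_setT setIT stg_restrictT; apply: stg_Fex_a0.
Qed.

Lemma attA_Gex : attA Gex =2 Gex_att.
Proof. by move=> x y; rewrite /attA !in_setT !andbT. Qed.

Lemma args_restrict_Gex X : args (restrict Gex X) = X.
Proof. exact: setTI. Qed.

Lemma Gex_unattacked_a2 z : ~~ attA Gex z a2.
Proof. by rewrite attA_Gex; case: (ord3P z) => ->. Qed.

Lemma scc_Gex_a01 a : a \in [set a0; a1] -> scc Gex a = [set a0; a1].
Proof.
have conn : {in [set a0; a1] &, forall x y, connect (attA Gex) x y}.
  move=> x y; rewrite !inE => /orP[]/eqP-> /orP[]/eqP->;
  by rewrite ?connect0 // connect1 // attA_Gex.
move=> a01; apply/setP=> b; rewrite in_scc !in_setT /=.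
case: (ord3P b) => ->; try by rewrite !conn // !inE eqxx ?orbT.
rewrite !inE /=; apply/negbTE/andP=> -[/(connect_unattacked Gex_unattacked_a2) eq_a2 _].
by move: a01; rewrite eq_a2 !inE.
Qed.

Lemma scc_Gex_a2 : scc Gex a2 = [set a2].
Proof.
apply/setP=> b; rewrite in_scc !inE /=; apply/idP/eqP=> [|->]; last by rewrite connect0.
by case/andP=> _ /(connect_unattacked Gex_unattacked_a2).
Qed.

Lemma DS_Gex_a01 : DS Gex [set a2] [set a0; a1] = [set a0].
Proof.
rewrite DS_set1 ?inE //; apply/setP=> x; rewrite !inE.
by case: (ord3P x) => ->.
Qed.

Lemma stg_Gex_a2 : [set a2] \in stg Gex.
Proof.
have cf_a2 : conflict_free Gex [set a2].
  by apply/conflict_freeP; split=> [|x y /set1P-> /set1P->]; rewrite ?subsetT.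
rewrite inE cf_a2; apply/forall_inP=> U /conflict_freeP[_ cfU].
apply/negP=> /properP[sub_range [x xRU xR]].
have a2U : a2 \in U.
  have := subsetP sub_range a2; rewrite !inE eqxx => /(_ isT)/orP[//|].
  by case/exists_inP=> y _; case: (ord3P y) => ->.
have a0R : a0 \in range Gex [set a2].
  by rewrite !inE /=; apply/exists_inP; exists a2; rewrite ?inE.
have {x xRU xR} : a1 \in range Gex U.
  by case: (ord3P x) xRU xR => -> // _; rewrite ?a0R // !inE eqxx.
case/setUP=> [a1U|/setIdP[_ /exists_inP[y yU]]]; first by have := cfU _ _ a1U a1U.
by case: (ord3P y) yU => -> yU //; [have := cfU _ _ a2U yU | have := cfU _ _ yU yU].
Qed.

Lemma stg_Gex_restr_a1 : set0 \in stg (restrict Gex [set a1]).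
Proof. by apply: set0_stg=> x; rewrite args_restrict_Gex => /set1P->; rewrite /= inE eqxx. Qed.

Lemma stg_Gex_restr_a2 : [set a2] \in stg (restrict Gex [set a2]).
Proof.
apply: stg_range_full; last by rewrite args_restrict_Gex subsetUl.
by apply/conflict_freeP; split=> [|x y /set1P-> /set1P->]; rewrite ?args_restrict_Gex ?inE.
Qed.

Lemma Gex_a01_reduced : [set a0; a1] :\: DS Gex [set a2] [set a0; a1] = [set a1].
Proof. by rewrite DS_Gex_a01 setU1K // inE. Qed.

Lemma stg15_Gex_a2 : [set a2] \in stg15 Gex.
Proof.
have /setIdP[cf_a2 _] := stg_Gex_a2.
rewrite inE cf_a2; apply/forall_inP=> a _ /=.
case: (ord3P a) => ->; last first.
  by rewrite scc_Gex_a2 DS_sub // setD0 setIid stg_Gex_restr_a2.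
all: rewrite scc_Gex_a01 ?Gex_a01_reduced; last by rewrite !inE eqxx ?orbT.
all: by rewrite disjoint_setI0 ?stg_Gex_restr_a1 // disjoints1 !inE.
Qed.

Lemma Cit1_Gex_a01 b :
  b \in [set a0; a1] -> Cit Gex [set a2] b 1 = scc (restrict Gex [set a1]) b.
Proof. by move=> b01; rewrite CitS Cit0 scc_Gex_a01 // Gex_a01_reduced. Qed.

Lemma Cit_alphaS_Gex_a0 : Cit Gex [set a2] a0 (alphaS Gex [set a2] a0) = set0.
Proof.
have a0_01 : a0 \in [set a0; a1] by rewrite !inE eqxx.
have C0 : Cit Gex [set a2] a0 0 = [set a0; a1] by rewrite Cit0 scc_Gex_a01.
have C1 : Cit Gex [set a2] a0 1 = set0.
  by rewrite Cit1_Gex_a01 // scc_nonarg // args_restrict_Gex inE.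
rewrite (@alphaS_eq1 _ _ _ a0) ?C0 ?C1 ?inE //.
by rewrite eq_sym; apply/set0Pn; exists a0.
Qed.

Lemma Cit_alphaS_Gex_a1 : Cit Gex [set a2] a1 (alphaS Gex [set a2] a1) = [set a1].
Proof.
have a1_01 : a1 \in [set a0; a1] by rewrite !inE eqxx orbT.
have C1 : Cit Gex [set a2] a1 1 = [set a1].
  by rewrite Cit1_Gex_a01 // scc_singleton // args_restrict_Gex.
have DS_a1 : DS Gex [set a2] [set a1] = set0.
  by rewrite DS_set1 ?inE //; apply/setP=> b; rewrite !inE; case: eqP => // ->.
have C2 : Cit Gex [set a2] a1 2 = [set a1].
  by rewrite CitS C1 DS_a1 setD0 scc_singleton // args_restrict_Gex.
have C0 : Cit Gex [set a2] a1 0 = [set a0; a1] by rewrite Cit0 scc_Gex_a01.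
rewrite (@alphaS_eq1 _ _ _ a1) ?C0 ?C1 ?C2 ?eqxx ?orbT //.
by apply/eqP=> /setP/(_ a0); rewrite !inE eqxx.
Qed.

Lemma Cit_alphaS_Gex_a2 : Cit Gex [set a2] a2 (alphaS Gex [set a2] a2) = [set a2].
Proof.
have C0 : Cit Gex [set a2] a2 0 = [set a2] by rewrite Cit0 scc_Gex_a2.
have C1 : Cit Gex [set a2] a2 1 = [set a2].
  by rewrite CitS C0 DS_sub // setD0 scc_singleton // args_restrict_Gex.
by rewrite alphaS_eq0 ?C0 ?C1.
Qed.

Lemma tfstg2_Gex_a2 : [set a2] \in tfstg2 Gex.
Proof.
have /setIdP[cf_a2 _] := stg_Gex_a2.
rewrite inE cf_a2; apply/forall_inP=> a _ /=.
case: (ord3P a) => ->.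
- by rewrite Cit_alphaS_Gex_a0 inE.
- by rewrite Cit_alphaS_Gex_a1 disjoint_setI0 ?stg_Gex_restr_a1 ?orbT // disjoints1 inE.
- by rewrite Cit_alphaS_Gex_a2 setIid stg_Gex_restr_a2 orbT.
Qed.

Lemma Fex_Gex_comparable :
  [/\ wf_AF Fex, wf_AF Gex, args Fex = args Gex,
      forall x y, att Gex x y -> att Fex x y &
      forall x y, conf Fex x y = conf Gex x y].
Proof.
split=> // x y; rewrite ?in_setT //;
by case: (ord3P x) => ->; case: (ord3P y) => ->.
Qed.

Lemma not_skepticism_adequate (sigma : semantics) :
  {in sigma _ Fex, forall S : {set 'I_3}, a0 \in S} -> [set a2] \in sigma _ Gex ->
  ~ skepticism_adequate (@prec_cap) sigma /\ ~ skepticism_adequate (@prec_W) sigma.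
Proof.
move=> a0_Fex a2_Gex; have [wfF wfG eq_args subGF eq_conf] := Fex_Gex_comparable.
have a0_a2 : a0 \notin [set a2] by rewrite inE.
have adequate_pre pre : skepticism_adequate pre sigma -> pre _ (sigma _ Fex) (sigma _ Gex).
  by move/(_ _ Fex Gex wfF wfG eq_args subGF eq_conf).
split=> /adequate_pre; apply/negP.
  exact: prec_capN a0_Fex a2_Gex a0_a2.
exact: prec_WN a0_Fex a2_Gex a0_a2.
Qed.

Theorem theorem17 :
  ~ skepticism_adequate (@prec_cap) (@stg) /\ ~ skepticism_adequate (@prec_W) (@stg) /\
  ~ skepticism_adequate (@prec_cap) (@tfstg2) /\ ~ skepticism_adequate (@prec_W) (@tfstg2) /\
  ~ skepticism_adequate (@prec_cap) (@stg15) /\ ~ skepticism_adequate (@prec_W) (@stg15).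
Proof.
have [stg_cap stg_W] := not_skepticism_adequate stg_Fex_a0 stg_Gex_a2.
have [tf_cap tf_W] := not_skepticism_adequate tfstg2_Fex_a0 tfstg2_Gex_a2.
have [stg15_cap stg15_W] := not_skepticism_adequate stg15_Fex_a0 stg15_Gex_a2.
by do !split.
Qed.
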